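(* Let $\Pi$ be a max-FGPP with constants satisfying $\frac{\alpha_1}{2}\ge\alpha_2$. Let $\mathcal{I}=(G=(V,E),k,p)$ be an instance of $\Pi$ and define the instance $f(\mathcal{I})=(U,\mathcal{S},w,k',p')$ of the maximization version of $k'$-WEC by: $U=V$; $\mathcal{S}=\bigcup_{i=1}^k\mathcal{S}_i$, where $\mathcal{S}_i$ is the family of node-sets of connected subgraphs of $G$ on exactly $i$ nodes; $w(S)=\mathrm{val}(S)$ for all $S\in\mathcal{S}$; $k'=k$ and $p'=p$. Then $\mathcal{I}$ is a yes-instance of $\Pi$ if and only if $f(\mathcal{I})$ is a yes-instance of the maximization version of $k'$-WEC.
   Context: Graphs are finite, simple and undirected. For $G=(V,E)$ and $X\subseteq V$, $E(X)$ is the set of edges with both endpoints in $X$, $E(X,V\setminus X)$ the set of edges with exactly one endpoint in $X$, and $\mathrm{val}(X)=\alpha_1|E(X)|+\alpha_2|E(X,V\setminus X)|$. The max-FGPP $\Pi$ defined by $\alpha_1,\alpha_2\in\mathbb{R}$: given $G=(V,E)$, $k\in\mathbb{N}$ and $p\in\mathbb{R}$, decide whether there is $X\subseteq V$ with $|X|=k$ and $\mathrm{val}(X)\ge p$. Maximization version of Weighted $k'$-Exact Cover ($k'$-WEC): given a universe $U$, a family $\mathcal{S}$ of nonempty subsets of $U$, a function $w:\mathcal{S}\to\mathbb{R}$, $k'\in\mathbb{N}$ and $p'\in\mathbb{R}$, decide whether there is a subfamily $\mathcal{S}'\subseteq\mathcal{S}$ of pairwise disjoint sets with $|\bigcup\mathcal{S}'|=k'$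 and $\sum_{S\in\mathcal{S}'}w(S)\ge p'$. *)

From mathcomp Require Import all_boot all_order all_algebra.
Set Implicit Arguments. Unset Strict Implicit. Unset Printing Implicit Defensive.
Import Order.TTheory GRing.Theory Num.Theory.
Local Open Scope ring_scope.

(* A finite simple undirected graph is given by a finType V and a symmetric,
   irreflexive edge relation e : rel V.  Edges are the 2-element sets {x,y}
   with e x y. *)

Section Graph.
Variables (V : finType) (e : rel V).

Definition edges_in (X : {set V}) : {set {set V}} :=
  [set A : {set V} | [exists x, exists y,
     [&& A == [set x; y], e x y, x \in X & y \in X]]].

Definition edges_cut (X : {set V}) : {set {set V}} :=
  [set A : {set V} | [exists x, exists y,
     [&& A == [set x; y], e x y, x \in X & y \notin X]]].

Definition fgpp_val (R : numDomainType) (a1 a2 : R) (X : {set V}) : R :=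
  a1 * (#|edges_in X|)%:R + a2 * (#|edges_cut X|)%:R.

Definition fgpp_yes (R : numDomainType) (a1 a2 : R) (k : nat) (p : R) : Prop :=
  exists X : {set V}, #|X| = k /\ p <= fgpp_val a1 a2 X.

Definition induced_rel (S : {set V}) : rel V :=
  [rel x y | [&& x \in S, y \in S & e x y]].
Definition induced_connected (S : {set V}) : bool :=
  [forall x in S, forall y in S, connect (induced_rel S) x y].

Definition conn_family (k : nat) : {set {set V}} :=
  [set S : {set V} | [&& 1 <= #|S|, #|S| <= k & induced_connected S]]%N.

End Graph.

Definition wec_yes (U : finType) (R : numDomainType) (F : {set {set U}})
    (w : {set U} -> R) (k' : nat) (p' : R) : Prop :=
  exists F' : {set {set U}},
    [/\ F' \subset F,
        {in F' &, forall A B : {set U}, A != B -> [disjoint A & B]},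
        #|\bigcup_(A in F') A| = k'
      & p' <= \sum_(A in F') w A].

From mathcomp Require Import all_boot all_order all_algebra.
From mathcomp Require Import ring lra.
Import Order.TTheory GRing.Theory Num.Theory.
Local Open Scope ring_scope.

(* val(X) is a sum over the edges of G of a contribution depending only on
   which endpoints lie in X.  For pairwise disjoint S_1, ..., S_m with union X,
   an edge joining two different S_i counts a1 in val(X) but 2 a2 in the sum
   of the val(S_i), and every other edge counts the same on both sides.  So
   when a2 <= a1/2 an exact cover yields the k-set X with val(X) at least its
   weight; conversely the connected components of G[X] form an exact cover of
   X by sets of the family whose weight is exactly val(X), since no edge joins
   two of them. *)

Section EdgeDecomposition.

Set Implicit Arguments. Unset Strict Implicit.

Variables (R : realDomainType) (a1 a2 : R) (V : finType) (e : rel V).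
Hypotheses (esym : symmetric e) (eirr : irreflexive e).

Definition is_edge (A : {set V}) := [exists x, exists y, (A == [set x; y]) && e x y].

Definition val_edge (S A : {set V}) : R :=
  a1 * (A \in edges_in e S)%:R + a2 * (A \in edges_cut e S)%:R.

Lemma natr_card (T : finType) (B : {set T}) :
  (#|B|%:R : R) = \sum_(A : T) (A \in B)%:R.
Proof.
rewrite -[LHS]mulr1n -sumr_const big_mkcond /=.
by apply: eq_bigr => A _; case: (A \in B).
Qed.

Lemma fgpp_val_edgeE S : fgpp_val e a1 a2 S = \sum_A val_edge S A.
Proof. by rewrite /fgpp_val /val_edge big_split /= -!mulr_sumr !natr_card. Qed.

Lemma mem_edges_in2 x y S :
  e x y -> ([set x; y] \in edges_in e S) = (x \in S) && (y \in S).
Proof.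
move=> exy; apply/idP/andP => [|[xS yS]]; last first.
  rewrite inE; apply/existsP; exists x; apply/existsP; exists y.
  by rewrite eqxx exy xS yS.
rewrite inE => /existsP[x' /existsP[y' /and4P[/eqP xy_eq _ x'S y'S]]].
have : x \in [set x'; y'] by rewrite -xy_eq set21.
have : y \in [set x'; y'] by rewrite -xy_eq set22.
by do 2![case/set2P => ->].
Qed.

Lemma mem_edges_cut2 x y S :
  e x y -> ([set x; y] \in edges_cut e S) = ((x \in S) != (y \in S)).
Proof.
move=> exy; have nxy : x != y by apply: contraTneq exy => ->; rewrite eirr.
apply/idP/idP.
  rewrite inE => /existsP[x' /existsP[y' /and4P[/eqP xy_eq _ x'S y'S]]].
  have xx'y' : x \in [set x'; y'] by rewrite -xy_eq set21.
  have yx'y' : y \in [set x'; y'] by rewrite -xy_eq set22.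
  move: nxy; case/set2P: xx'y' => ->; case/set2P: yx'y' => ->;
    by rewrite ?eqxx ?x'S ?(negbTE y'S).
rewrite inE; case: (boolP (x \in S)) => xS; case: (boolP (y \in S)) => yS //= _.
  by apply/existsP; exists x; apply/existsP; exists y; rewrite eqxx exy xS yS.
apply/existsP; exists y; apply/existsP; exists x.
by rewrite setUC eqxx esym exy xS yS.
Qed.

Lemma val_edge_set2 x y S : e x y ->
  val_edge S [set x; y] =
  a1 * ((x \in S)%:R * (y \in S)%:R) +
  a2 * ((x \in S)%:R + (y \in S)%:R - 2 * ((x \in S)%:R * (y \in S)%:R)).
Proof.
move=> exy; rewrite /val_edge mem_edges_in2 // mem_edges_cut2 //.
by case: (x \in S); case: (y \in S); rewrite /= ?mulr1n ?mulr0n; ring.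
Qed.

Lemma val_edge_nonedge A S : ~~ is_edge A -> val_edge S A = 0.
Proof.
move=> nedge; rewrite /val_edge.
have edge_of (q : rel V) :
    [exists x, exists y, [&& A == [set x; y], e x y & q x y]] -> False.
  move=> /existsP[x /existsP[y /and3P[Ax exy _]]].
  by case/negP: nedge; apply/existsP; exists x; apply/existsP; exists y; rewrite Ax.
have /negbTE-> : A \notin edges_in e S by rewrite inE; apply/negP; apply: edge_of.
have /negbTE-> : A \notin edges_cut e S by rewrite inE; apply/negP; apply: edge_of.
by rewrite !mulr0 addr0.
Qed.

Variable F : {set {set V}}.
Hypothesis trivF : trivIset F.

Lemma sum_mem_trivIset x :
  \sum_(S in F) ((x \in S)%:R : R) = (x \in cover F)%:R.
Proof.
have [xF|xNF] := boolP (x \in cover F); last first.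
  rewrite big1 // => S SF; case: (boolP (x \in S)) => // xS.
  by case/negP: xNF; apply/bigcupP; exists S.
have [S0 S0F xS0] := bigcupP xF.
rewrite (bigD1 S0) //= xS0 big1 ?addr0 // => S /andP[SF nS].
case: (boolP (x \in S)) => // xS.
by rewrite -(def_pblock trivF SF xS) (def_pblock trivF S0F xS0) eqxx in nS.
Qed.

Lemma sum_mem2_le x y :
  \sum_(S in F) (((x \in S)%:R : R) * (y \in S)%:R) <=
  (x \in cover F)%:R * (y \in cover F)%:R.
Proof.
have le_x : \sum_(S in F) (((x \in S)%:R : R) * (y \in S)%:R) <= (x \in cover F)%:R.
  by rewrite -sum_mem_trivIset; apply: ler_sum => S _; rewrite ler_piMr ?lern1 ?leq_b1.
have le_y : \sum_(S in F) (((x \in S)%:R : R) * (y \in S)%:R) <= (y \in cover F)%:R.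
  by rewrite -sum_mem_trivIset; apply: ler_sum => S _; rewrite ler_piMl ?lern1 ?leq_b1.
by move: le_x le_y; case: (x \in cover F); case: (y \in cover F);
  rewrite ?mulr1n ?mulr0n ?mulr1 ?mulr0.
Qed.

Lemma sum_mem2_eq x y : (x \in cover F -> y \in cover F -> y \in pblock F x) ->
  \sum_(S in F) (((x \in S)%:R : R) * (y \in S)%:R) =
  (x \in cover F)%:R * (y \in cover F)%:R.
Proof.
move=> same_block; apply/eqP; rewrite eq_le sum_mem2_le /=.
have sum_ge0 : 0 <= \sum_(S in F) (((x \in S)%:R : R) * (y \in S)%:R).
  by apply: sumr_ge0 => S _; rewrite mulr_ge0.
have [xF|] := boolP (x \in cover F); last by rewrite mulr0n mul0r.
have [yF|] := boolP (y \in cover F); last by rewrite mulr0n mulr0.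
rewrite (bigD1 (pblock F x)) ?pblock_mem //= mem_pblock xF same_block //.
by rewrite mulr1n mulr1 lerDl; apply: sumr_ge0 => S _; rewrite mulr_ge0.
Qed.

Lemma sum_val_edge_set2 x y : e x y ->
  \sum_(S in F) val_edge S [set x; y] =
  a1 * (\sum_(S in F) ((x \in S)%:R * (y \in S)%:R)) +
  a2 * ((x \in cover F)%:R + (y \in cover F)%:R
        - 2 * (\sum_(S in F) ((x \in S)%:R * (y \in S)%:R))).
Proof.
move=> exy; under eq_bigr => S _ do rewrite val_edge_set2 //.
rewrite big_split /= -!mulr_sumr sumrB big_split /= -mulr_sumr.
by rewrite !sum_mem_trivIset.
Qed.

Lemma sum_fgpp_val_le_cover : 2 * a2 <= a1 ->
  \sum_(S in F) fgpp_val e a1 a2 S <= fgpp_val e a1 a2 (cover F).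
Proof.
move=> a2_le; rewrite fgpp_val_edgeE.
under eq_bigr => S _ do rewrite fgpp_val_edgeE.
rewrite exchange_big /=; apply: ler_sum => A _.
have [/existsP[x /existsP[y /andP[/eqP-> exy]]]|nedge] :=
  boolP (is_edge A); last first.
  by rewrite val_edge_nonedge // big1 // => S _; rewrite val_edge_nonedge.
rewrite sum_val_edge_set2 // val_edge_set2 //.
(* the coefficient [a1 - 2 a2] of the pair count is nonnegative *)
have := sum_mem2_le x y; move: (\sum_(S in F) _) => n.
move: ((x \in cover F)%:R) ((y \in cover F)%:R) => bx by' n_le.
nra.
Qed.

Lemma sum_fgpp_val_cover :
  {in cover F &, forall x y, e x y -> y \in pblock F x} ->
  \sum_(S in F) fgpp_val e a1 a2 S = fgpp_val e a1 a2 (cover F).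
Proof.
move=> unsplit; rewrite fgpp_val_edgeE.
under eq_bigr => S _ do rewrite fgpp_val_edgeE.
rewrite exchange_big /=; apply: eq_bigr => A _.
have [/existsP[x /existsP[y /andP[/eqP-> exy]]]|nedge] :=
  boolP (is_edge A); last first.
  by rewrite val_edge_nonedge // big1 // => S _; rewrite val_edge_nonedge.
rewrite sum_val_edge_set2 // val_edge_set2 // sum_mem2_eq //.
by move=> xF yF; apply: unsplit.
Qed.

End EdgeDecomposition.

Section Components.

Set Implicit Arguments. Unset Strict Implicit.

Variables (V : finType) (e : rel V).
Hypothesis esym : symmetric e.

Lemma connect_induced (r : rel V) (B : {set V}) :
  subrel r e -> (forall x y, x \in B -> r x y -> y \in B) ->
  forall u v, u \in B -> connect r u v -> connect (induced_rel e B) u v.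
Proof.
move=> r_e closedB u v uB /connectP[p r_p ->] {v}.
elim: p u uB r_p => //= y p IHp u uB /andP[ruy r_p].
have yB := closedB u y uB ruy.
apply: connect_trans (IHp y yB r_p).
by apply: connect1; rewrite /induced_rel /= uB yB r_e.
Qed.

Variable X : {set V}.

Local Notation r := (induced_rel e X).

Definition components := equivalence_partition (connect r) X.

Lemma connect_induced_equivalence : {in X & &, equivalence_rel (connect r)}.
Proof.
have r_sym : symmetric r by move=> x y; rewrite /induced_rel /= esym andbCA.
move=> x y z _ _ _; split; first exact: connect0.
by move/(same_connect (sym_connect_sym r_sym)) ->.
Qed.

Lemma partition_components : partition components X.
Proof. exact: equivalence_partitionP connect_induced_equivalence. Qed.

Lemma mem_pblock_components :
  {in X &, forall x y, (y \in pblock components x) = connect r x y}.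
Proof. exact: pblock_equivalence_partition connect_induced_equivalence. Qed.

Lemma components_conn_family B : B \in components -> B \in conn_family e #|X|.
Proof.
have [/eqP coverX trivC set0N] := and3P partition_components.
move=> BC; have BX : B \subset X by rewrite -coverX; apply: bigcup_sup.
rewrite inE subset_leq_card // card_gt0 /=; apply/andP; split.
  by apply: contraNneq set0N => <-.
apply/forallP => u; apply/implyP => uB; apply/forallP => v; apply/implyP => vB.
have r_e : subrel r e by move=> x y /and3P[].
have closedB x y : x \in B -> r x y -> y \in B.
  move=> xB rxy; have [xX yX _] := and3P rxy.
  by rewrite -(def_pblock trivC BC xB) mem_pblock_components ?connect1.
have ruv : connect r u v.
  by rewrite -mem_pblock_components ?(subsetP BX) ?(def_pblock trivC BC uB).
exact: connect_induced r_e closedB u v uB ruv.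
Qed.

Lemma components_unsplit :
  {in cover components &, forall x y, e x y -> y \in pblock components x}.
Proof.
have [/eqP coverX _ _] := and3P partition_components.
rewrite coverX => x y xX yX exy.
by rewrite mem_pblock_components ?connect1 // /induced_rel /= xX yX.
Qed.

End Components.

Theorem lemma1 (R : realFieldType) (a1 a2 : R) (V : finType) (e : rel V)
    (esym : symmetric e) (eirr : irreflexive e) (k : nat) (p : R) :
  a2 <= a1 / 2 ->
  fgpp_yes e a1 a2 k p <->
  wec_yes (conn_family e k) (fgpp_val e a1 a2) k p.
Proof.
move=> a2_le; have a2_le' : 2 * a2 <= a1 by lra.
split=> [[X [cardX p_le]] | [F [_ /trivIsetP trivF cardF p_le]]].
- have [/eqP coverX trivC _] := and3P (partition_components esym X).
  exists (components e X); split.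
  + by apply/subsetP => B; rewrite -cardX; apply: components_conn_family.
  + exact/trivIsetP.
  + by rewrite -{1}coverX in cardX.
  + have unsplit := components_unsplit esym (X := X).
    by rewrite (sum_fgpp_val_cover a1 a2 esym eirr trivC unsplit) coverX.
- exists (cover F); split => //.
  exact: le_trans p_le (sum_fgpp_val_le_cover esym eirr trivF a2_le').
Qed.
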